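(* Assume the setup below and let $\boldsymbol{\lambda}\in\mathcal{P}(l,n)$. There exists a unique $l$-tuple $\tilde{\mathbf{C}}=(\tilde{C}^0,\dots,\tilde{C}^{l-1})$ of strictly decreasing sequences of integers such that (ii) $\tilde{C}_{[t]}=C_{[t]}(\boldsymbol{\lambda})$ as multisets for all $0\le t\le d$; (iii) $\tilde{C}^p\subseteq\tilde{C}^{p-1}$ (as sets) for every $p\in J$ with $p\ne0$; (iv) if $0\in I_0$, then $S^{-1}\tilde{C}^0\subseteq\tilde{C}^{l-1}$. Here $\tilde{C}_{[t]}$ is formed from $\tilde{\mathbf{C}}$ by the same recipe as $C_{[t]}(\boldsymbol{\lambda})$ is formed from $\mathbf{C}(\boldsymbol{\lambda})$.
   Context: Fix positive integers $l,n$. Partitions, Young diagrams, contents, $\mathcal{P}(l,n)$ ($l$-multipartitions of $n$) are as usual. For $r\in\mathbb{Z}$, $\beta^r(\lambda)=(\lambda_i+r+1-i)_{i\ge1}$. For a strictly decreasing integer sequence $C$ and $i\in\mathbb{Z}$, $S^iC=(C_1+i,C_2+i,\dots)$. Parameters: $H_1,\dots,H_{l-1}\in\mathbb{Q}$, $H_0=-(H_1+\dots+H_{l-1})$, $d$ a positive integer with $dH_i\in\mathbb{Z}$. Put $\theta=(1+H_0,H_1,\dots,H_{l-1})$. Let $S_l$ be the permutations of $\{0,\dots,l-1\}$, generated by $s_i$ ($1\le i\le l-1$) transposing $i-1,i$, acting on $\mathbb{Q}^l$ by: $s_i\cdot\theta$ has entry $\theta_{i-1}+\theta_i$ in position $i-1$,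 $-\theta_i$ in position $i$, $\theta_i+\theta_{i+1}$ in position $i+1$, otherwise unchanged (indices mod $l$). Let $R\subset\mathbb{Z}^l$ be generated by $\alpha_i=-e_{i-1}+2e_i-e_{i+1}$ (indices mod $l$), $\tilde{S}_l=R\rtimes S_l$ acting on $\{\theta\in\mathbb{Q}^l:\sum\theta_i=1\}$ with $R$ by translations, $\mathbb{Z}^l_0$ the integer vectors of coordinate sum $0$, and $\phi(\mathbf{r})=\sum_j(r_{j-1}-r_j)e_j$ (indices mod $l$). Fix $w_\theta=\phi(\mathbf{r})w\in\tilde{S}_l$ ($\mathbf{r}\in\mathbb{Z}^l_0$, $w\in S_l$) with $\boldsymbol{\epsilon}=w_\theta\cdot\theta$ satisfying $0\le\varepsilon_i\le1$; let $J=\{j:\varepsilon_j=0\}$; then $d\boldsymbol{\epsilon}\in\mathbb{Z}^l$. Let $m_i(\mathbf{c})=c_0+\dots+c_i$ and $I_t=\{p:m_p(d\boldsymbol{\epsilon})=t\}$ for $0\le t\le d$. For $\boldsymbol{\lambda}\in\mathcal{P}(l,n)$ put $C^p(\boldsymbol{\lambda})=\beta^{r_p}(\lambda^{(w^{-1}(p))})$ and $\mathbf{C}(\boldsymbol{\lambda})=(C^0,\dots,C^{l-1})$. For $1\le t\le d-1$ let $C_{[t]}$ be the multiset union $\biguplus_{p\in I_t}C^p$, and let $C_{[0]}=C_{[d]}$ be the multiset union $\biguplus_{p\in I_0}S^{-1}C^p\uplus\biguplus_{p\in I_d}C^p$. *)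

From HB Require Import structures.
From mathcomp Require Import all_boot all_order all_algebra.
From Stdlib Require Import ClassicalEpsilon.
Set Implicit Arguments. Unset Strict Implicit. Unset Printing Implicit Defensive.
Import Order.TTheory GRing.Theory Num.Theory.
Local Open Scope ring_scope.

(* Vectors of Q^l / Z^l are functions nat -> _, only the entries 0..l-1 matter;
   indices are taken mod l where the paper says "indices mod l". *)

Definition is_partition (s : seq nat) : bool :=
  sorted geq s && all (fun x => 0 < x)%N s.

(* lam k = lambda^(k) for k < l *)
Definition is_multipartition (l n : nat) (lam : nat -> seq nat) : Prop :=
  (forall k, (k < l)%N -> is_partition (lam k)) /\
  (\sum_(k < l) sumn (lam k))%N = n.

(* beta^r(lambda) = (lambda_i + r + 1 - i)_{i>=1}; index j = i - 1 *)
Definition beta (r : int) (lam : seq nat) : nat -> int :=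
  fun j => ((nth 0%N lam j)%:Z + r - j%:Z)%R.

Definition H0 (l : nat) (H : nat -> rat) : rat := (- \sum_(1 <= i < l) H i)%R.

Definition theta (l : nat) (H : nat -> rat) : nat -> rat :=
  fun k => if k == 0%N then (1 + H0 l H)%R else H k.

Definition alpha (l i : nat) : nat -> rat :=
  fun k => ((2%:R * (k == i)%:R - (k == (i + l - 1) %% l)%N%:R
            - (k == (i + 1) %% l)%N%:R) : rat)%R.

Definition sact (l i : nat) (th : nat -> rat) : nat -> rat :=
  fun k => (th k - th i * alpha l i k)%R.

(* an element w of S_l, given as a word [:: i1; ...; ik] meaning s_i1 ... s_ik *)
Definition wact (l : nat) (ws : seq nat) (th : nat -> rat) : nat -> rat :=
  foldr (sact l) th ws.

Definition transp (i k : nat) : nat :=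
  if k == i.-1 then i else if k == i then i.-1 else k.

Definition wperm (ws : seq nat) : nat -> nat :=
  foldr (fun i f => fun k => transp i (f k)) id ws.

Definition wperm_inv (ws : seq nat) : nat -> nat := wperm (rev ws).

Definition phi (l : nat) (r : nat -> int) : nat -> int :=
  fun j => (r ((j + l - 1) %% l)%N - r j)%R.

(* epsilon = w_theta . theta = phi(r) + w . theta *)
Definition eps (l : nat) (H : nat -> rat) (r : nat -> int) (ws : seq nat) : nat -> rat :=
  fun j => ((phi l r j)%:~R + wact l ws (theta l H) j)%R.

Definition mdeps (l d : nat) (H : nat -> rat) (r : nat -> int) (ws : seq nat) (p : nat) : rat :=
  (\sum_(i < p.+1) d%:R * eps l H r ws i)%R.

Definition inI (l d : nat) (H : nat -> rat) (r : nat -> int) (ws : seq nat) (t p : nat) : bool :=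
  mdeps l d H r ws p == (t%:R : rat).

Definition strictly_decreasing (C : nat -> int) : Prop := forall i, (C i.+1 < C i)%R.

Definition memC (C : nat -> int) (x : int) : Prop := exists i, C i = x.

(* multiplicity 0/1 of x in a strictly decreasing sequence (classical test) *)
Definition ind (P : Prop) : nat := if excluded_middle_informative P then 1%N else 0%N.

Definition shiftS (i : int) (C : nat -> int) : nat -> int := fun j => (C j + i)%R.

(* multiplicity of x in C_[t] built from the family Cf (Cf p = C^p):
   for 1 <= t <= d-1 : multiset union of C^p, p in I_t;
   for t = 0 or t = d: union of S^{-1} C^p (p in I_0) and C^p (p in I_d). *)
Definition bracket (l d : nat) (H : nat -> rat) (r : nat -> int) (ws : seq nat)
  (Cf : nat -> nat -> int) (t : nat) (x : int) : nat :=
  if (t == 0%N) || (t == d) then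
    (\sum_(p < l | inI l d H r ws 0 p) ind (memC (shiftS (-1) (Cf p)) x)
     + \sum_(p < l | inI l d H r ws d p) ind (memC (Cf p) x))%N
  else
    (\sum_(p < l | inI l d H r ws t p) ind (memC (Cf p) x))%N.

Definition Clam (r : nat -> int) (ws : seq nat) (lam : nat -> seq nat) : nat -> nat -> int :=
  fun p => beta (r p) (lam (wperm_inv ws p)).

Definition good_tuple (l d : nat) (H : nat -> rat) (r : nat -> int) (ws : seq nat)
  (lam : nat -> seq nat) (Ct : nat -> nat -> int) : Prop :=
  (forall p, (p < l)%N -> strictly_decreasing (Ct p)) /\
  (forall t, (t <= d)%N -> forall x,
      bracket l d H r ws Ct t x = bracket l d H r ws (Clam r ws lam) t x) /\
  (forall p, (0 < p < l)%N -> eps l H r ws p = 0%R ->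
      forall x, memC (Ct p) x -> memC (Ct p.-1) x) /\
  (inI l d H r ws 0 0 ->
      forall x, memC (shiftS (-1) (Ct 0%N)) x -> memC (Ct l.-1) x).

From HB Require Import structures.
From mathcomp Require Import all_boot all_order all_algebra zify.
From Stdlib Require Import ClassicalEpsilon.
Set Implicit Arguments. Unset Strict Implicit. Unset Printing Implicit Defensive.
Import Order.TTheory GRing.Theory Num.Theory.
Local Open Scope ring_scope.

(* Since 0 <= eps_j <= 1, d eps is integral and sum_j eps_j = 1, the partial
   sums m_p(d eps) increase from m_0 >= 0 to m_(l-1) = d: the I_t are
   consecutive intervals of {0, ..., l-1}, and p - 1, p lie in the same I_t
   exactly when eps_p = 0.  For each level t, list the indices contributing
   to C_[t] as a chain: I_t in increasing order, and for t in {0, d} the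
   elements of I_d followed by those of I_0; let D^p be C~^p, shifted by
   S^{-1} when p is in I_0.  Conditions (iii) and (iv) make the D^p nested
   along every chain, so by counting, y lies in D^p iff the position of p in
   its chain is below the multiplicity of y in C_[t](lambda).  This
   characterization determines C~, because a strictly decreasing sequence is
   determined by its set of values.  Conversely the sets it prescribes
   contain a down-set (-oo, N] and are bounded above, so they are the values
   of strictly decreasing sequences, and these satisfy (ii)-(iv). *)

Lemma indP (P : Prop) : reflect P (ind P == 1%N).
Proof. by rewrite /ind; case: excluded_middle_informative => h; constructor. Qed.

Lemma ind_T (P : Prop) : P -> ind P = 1%N.
Proof. by rewrite /ind; case: excluded_middle_informative. Qed.

Lemma ind_F (P : Prop) : ~ P -> ind P = 0%N.
Proof. by rewrite /ind; case: excluded_middle_informative. Qed.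

Lemma ind_le1 (P : Prop) : (ind P <= 1)%N.
Proof. by rewrite /ind; case: excluded_middle_informative. Qed.

Lemma ind_bool (b : bool) : ind b = b.
Proof. by case: b; [rewrite ind_T | rewrite ind_F]. Qed.

Lemma ind_iff (P Q : Prop) : (P <-> Q) -> ind P = ind Q.
Proof.
move=> E; case: (classic P) => hP; first by rewrite !ind_T //; apply/E.
by rewrite !ind_F // => /E.
Qed.

Lemma sum_ind_le (T : Type) (s : seq T) (D : T -> Prop) :
  (\sum_(q <- s) ind (D q) <= size s)%N.
Proof.
elim: s => [|a s IH]; first by rewrite big_nil.
by rewrite big_cons /= -add1n leq_add // ind_le1.
Qed.

Lemma count_nested (T : Type) (x0 : T) (s : seq T) (D : T -> Prop) :
  (forall i j, (i <= j)%N -> (j < size s)%N -> D (nth x0 s j) -> D (nth x0 s i)) ->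
  forall k, (k < size s)%N -> ((k < \sum_(q <- s) ind (D q))%N <-> D (nth x0 s k)).
Proof.
rewrite (big_nth x0) big_mkord; move: (size s) => n.
elim: n => [|n IH] Hant k //; rewrite ltnS big_ord_recr /= => kn.
have {}IH := IH (fun i j ij jn => Hant i j ij (ltnW jn)).
case: (classic (D (nth x0 s n))) => Dn.
  rewrite (ind_T Dn) addn1 ltnS (eq_bigr (fun _ => 1%N)) => [|i _]; last first.
    by apply: ind_T; apply: Hant Dn => //; exact: ltnW.
  by rewrite sum1_card card_ord kn; split=> // _; apply: Hant Dn.
rewrite (ind_F Dn) addn0; move: kn; rewrite leq_eqVlt => /orP [/eqP ->|]; last exact: IH.
split=> // h; suff : (\sum_(i < n) ind (D (nth x0 s i)) <= n)%N by rewrite leqNgt h.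
by rewrite -[X in (_ <= X)%N]card_ord -sum1_card leq_sum // => i _; exact: ind_le1.
Qed.

Lemma count_threshold (T : eqType) (s : seq T) (D : T -> Prop) (k : nat) :
  uniq s -> (k <= size s)%N -> (forall q, q \in s -> (D q <-> (index q s < k)%N)) ->
  (\sum_(q <- s) ind (D q))%N = k.
Proof.
elim: s k => [|a s IH] k /=; first by rewrite leqn0 big_nil => _ /eqP ->.
case/andP => /negP aNs us ks HD; rewrite big_cons.
have Ds q : q \in s -> (D q <-> (index q s < k.-1)%N).
  move=> qs; rewrite ltn_predRL (HD q); last by rewrite inE qs orbT.
  by case: eqP => // aq; case: aNs; rewrite aq.
have ks' : (k.-1 <= size s)%N by move: ks; case: (k).
rewrite (IH k.-1 us ks' Ds) (ind_iff (HD a (mem_head a s))) eqxx ind_bool.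
by case: k {ks HD Ds ks'}.
Qed.

Definition included (C C' : nat -> int) : Prop := forall x, memC C x -> memC C' x.

Lemma memC_shift C y : memC (shiftS (-1) C) y <-> memC C (y + 1).
Proof.
rewrite /memC /shiftS; split=> [[i <-]|[i Ei]]; exists i; first by rewrite subrK.
by rewrite Ei addrK.
Qed.

Lemma sd_ltn (C : nat -> int) : strictly_decreasing C ->
  forall i j, (i < j)%N -> C j < C i.
Proof.
move=> HC i; elim=> // j IH; rewrite ltnS leq_eqVlt => /orP [/eqP ->|/IH h].
  exact: HC.
exact: lt_trans (HC j) h.
Qed.

Lemma sd_leq (C : nat -> int) : strictly_decreasing C ->
  forall i j, (i <= j)%N -> C j <= C i.
Proof.
move=> HC i j; rewrite leq_eqVlt => /orP [/eqP -> //|ij].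
exact/ltW/sd_ltn.
Qed.

Lemma sd_le_agree (C C' : nat -> int) (i : nat) :
  strictly_decreasing C -> strictly_decreasing C' ->
  included C C' -> (forall k, (k < i)%N -> C k = C' k) ->
  C i <= C' i.
Proof.
move=> HC HC' sub agree; have [j Ej] := sub (C i) (ex_intro _ i erefl).
case: (ltnP j i) => [ji|ij]; last by rewrite -Ej sd_leq.
by have := sd_ltn HC ji; rewrite -Ej agree // ltxx.
Qed.

Lemma sd_ext (C C' : nat -> int) : strictly_decreasing C -> strictly_decreasing C' ->
  (forall x, memC C x <-> memC C' x) -> forall i, C i = C' i.
Proof.
move=> HC HC' E; elim/ltn_ind => i IH; apply/eqP; rewrite eq_le.
rewrite sd_le_agree //= => [|x /E //].
by rewrite sd_le_agree // => [x /E //|k /IH ->].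
Qed.

(* Enumerate in decreasing order the (finitely many) elements of P in (N, M],
   then continue with N, N - 1, N - 2, ... *)
Lemma decreasing_enumeration (P : int -> Prop) (N M : int) :
  (forall x, x <= N -> P x) -> (forall x, P x -> x <= M) ->
  exists C, strictly_decreasing C /\ (forall x, memC C x <-> P x).
Proof.
move=> HN HM; have NM : N <= M by apply/HM/HN.
pose K := `|M - N|%N; have KE : K%:Z = M - N by rewrite /K gez0_abs // subr_ge0.
pose F := [seq x <- [seq M - i%:Z | i <- iota 0 K] | ind (P x) == 1%N].
have F_gtN x : x \in F -> N < x.
  rewrite mem_filter => /andP [_ /mapP [i]]; rewrite mem_iota add0n => iK ->.
  by rewrite ltrBrDl -ltrBrDr -KE ltz_nat.
have F_sorted : sorted (fun a b : int => b < a) F.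
  apply: sorted_filter => [a b c ba cb|]; first exact: lt_trans cb ba.
  rewrite sorted_map; apply: sub_sorted (iota_ltn_sorted 0 K) => i j ij /=.
  by rewrite ltrD2l ltrN2 ltz_nat.
exists (fun i => if (i < size F)%N then nth 0 F i else N - (i - size F)%N%:Z).
split=> [i|x] /=.
  case: ifP => h1; case: ifP => h2.
  - apply: (sorted_ltn_nth (leT := fun a b : int => b < a)) => //.
    by move=> a b c ba cb; exact: lt_trans cb ba.
  - by move: h2; rewrite (ltnW h1).
  - have -> : (i.+1 - size F = 0)%N by apply/eqP; rewrite subn_eq0.
    by rewrite subr0; apply: F_gtN; apply: mem_nth.
  - rewrite subSn; last by rewrite leqNgt h2.
    by rewrite -addn1 PoszD opprD addrA ltrBlDr ltrDl.
split.
  case=> i; case: ifP => h <-; last by apply: HN; rewrite lerBlDr lerDl.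
  by have := mem_nth 0 h; rewrite mem_filter => /andP [/indP].
move=> Px; case: (lerP x N) => xN.
  exists (size F + `|N - x|%N)%N; rewrite ltnNge leq_addr /= addKn gez0_abs ?subr_ge0 //.
  by rewrite opprB addrC subrK.
have xF : x \in F.
  rewrite mem_filter; apply/andP; split; first exact/indP.
  apply/mapP; exists `|M - x|%N; last by rewrite gez0_abs ?subr_ge0 ?HM // opprB addrC subrK.
  by rewrite mem_iota add0n -ltz_nat gez0_abs ?subr_ge0 ?HM // KE ltrD2l ltrN2.
by exists (index x F); rewrite index_mem xF nth_index.
Qed.

Lemma beta_low (R : int) (s : seq nat) (z : int) :
  z <= R - (size s)%:Z -> memC (beta R s) z.
Proof.
move=> hz; have h0 : 0 <= R - z by rewrite subr_ge0 (le_trans hz) // gerBl.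
exists `|R - z|%N; rewrite /beta gez0_abs // nth_default; last first.
  by rewrite -lez_nat gez0_abs // lerBrDl -lerBrDr.
by rewrite add0r opprB addrC subrK.
Qed.

Lemma beta_up (R : int) (s : seq nat) (z : int) :
  memC (beta R s) z -> z <= (sumn s)%:Z + R.
Proof.
have nth_le j : (nth 0 s j <= sumn s)%N.
  elim: s j => [|a s IH] [|j] //=; first exact: leq_addr.
  exact: leq_trans (IH j) (leq_addl _ _).
case=> j <-; rewrite /beta (le_trans (y := (nth 0%N s j)%:Z + R)) //.
  by rewrite gerBl.
by rewrite lerD2r lez_nat.
Qed.

Lemma beta_bounds (R : int) (s : seq nat) (B : nat) :
  (`|R| + size s + sumn s <= B)%N ->
  (forall z, z <= - B%:Z -> memC (beta R s) z) /\
  (forall z, memC (beta R s) z -> z <= B%:Z).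
Proof.
rewrite -lez_nat !PoszD abszE => hB.
have /andP [hRl hRu] : - `|R| <= R <= `|R| by rewrite -ler_norml.
have := le0z_nat (sumn s); have := le0z_nat (size s).
split=> z hz; [apply: beta_low | have := beta_up hz]; lia.
Qed.

(* The permutation action w . theta and the translation phi(r) preserve the
   coordinate sum, so eps = w_theta . theta still has coordinate sum 1. *)

Lemma sum_indicator (l a : nat) : (a < l)%N ->
  \sum_(k < l) (((k : nat) == a)%:R : rat) = 1.
Proof.
move=> al; rewrite (bigD1 (Ordinal al)) //= eqxx big1 ?addr0 // => k.
by rewrite -(inj_eq val_inj) => /negbTE ->.
Qed.

Lemma sum_alpha (l i : nat) : (i < l)%N -> \sum_(k < l) alpha l i k = 0.
Proof.
move=> il; have l0 : (0 < l)%N by apply: leq_ltn_trans il.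
by rewrite /alpha !sumrB -mulr_sumr !sum_indicator ?ltn_pmod // mulr1 subrr.
Qed.

Lemma sum_wact (l : nat) (ws : seq nat) (th : nat -> rat) :
  all (fun i => 0 < i < l)%N ws ->
  \sum_(k < l) wact l ws th k = \sum_(k < l) th k.
Proof.
elim: ws => //= i ws IH /andP [/andP [_ il] Hws].
by rewrite /sact sumrB -mulr_sumr sum_alpha // mulr0 subr0 IH.
Qed.

Lemma sum_theta (l : nat) (H : nat -> rat) : (0 < l)%N ->
  \sum_(k < l) theta l H k = 1.
Proof.
case: l => // l _; rewrite big_ord_recl /theta /= /H0 big_add1 /= big_mkord.
by rewrite -addrA addNr addr0.
Qed.

Lemma sum_phi (l : nat) (r : nat -> int) : (0 < l)%N -> \sum_(j < l) phi l r j = 0.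
Proof.
case: l => // l _; rewrite /phi sumrB big_ord_recl [X in _ - X]big_ord_recr /=.
have -> : \sum_(i < l) r ((bump 0 i + l.+1 - 1) %% l.+1)%N = \sum_(i < l) r i.
  apply: eq_bigr => i _; congr r.
  by rewrite /bump /= add1n addSn subn1 /= modnDr modn_small // ltnS ltnW.
by rewrite add0n subn1 /= modn_small // addrC subrr.
Qed.

Lemma sum_eps (l : nat) (H : nat -> rat) (r : nat -> int) (ws : seq nat) :
  (0 < l)%N -> all (fun i => 0 < i < l)%N ws ->
  \sum_(j < l) eps l H r ws j = 1.
Proof.
move=> l0 Hws; rewrite /eps big_split /= sum_wact // sum_theta //.
by rewrite -rmorph_sum sum_phi // add0r.
Qed.

Definition d_integral (l d : nat) (th : nat -> rat) : Prop :=
  forall k, (k < l)%N -> d%:R * th k \is a Num.int.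

Lemma d_integral_wact (l d : nat) (ws : seq nat) (th : nat -> rat) :
  all (fun i => 0 < i < l)%N ws -> d_integral l d th -> d_integral l d (wact l ws th).
Proof.
move=> + Hth; elim: ws => //= i ws IH /andP [/andP [_ il] /IH Hws] k kl.
rewrite /sact mulrBr mulrA rpredB ?Hws // rpredM ?Hws //.
by rewrite /alpha !rpredB ?rpredM ?natr_int.
Qed.

Lemma d_integral_theta (l d : nat) (H : nat -> rat) :
  (forall i, (0 < i < l)%N -> exists z : int, d%:R * H i = z%:~R) ->
  d_integral l d (theta l H).
Proof.
move=> Hz; have intH i : (0 < i < l)%N -> d%:R * H i \is a Num.int.
  by move=> /Hz [z ->]; exact: intr_int.
case=> [|k] kl; rewrite /theta /=; last exact: intH.
rewrite /H0 mulrDr mulr1 mulrN mulr_sumr rpredD ?natr_int // rpredN.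
by rewrite big_nat rpred_sum // => i /intH.
Qed.

Lemma d_integral_eps (l d : nat) (H : nat -> rat) (r : nat -> int) (ws : seq nat) :
  (forall i, (0 < i < l)%N -> exists z : int, d%:R * H i = z%:~R) ->
  all (fun i => 0 < i < l)%N ws -> d_integral l d (eps l H r ws).
Proof.
move=> Hz Hws k kl; have := d_integral_wact Hws (d_integral_theta Hz) kl.
by rewrite /eps mulrDr => Hw; rewrite rpredD // rpredM ?natr_int ?intr_int.
Qed.

Section Characterization.
Variables (l d : nat) (H : nat -> rat) (r : nat -> int) (ws : seq nat).
Hypothesis l_gt0 : (0 < l)%N.
Hypothesis d_gt0 : (0 < d)%N.
Hypothesis dH_int : forall i, (0 < i < l)%N -> exists z : int, d%:R * H i = z%:~R.
Hypothesis ws_gen : all (fun i => 0 < i < l)%N ws.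
Hypothesis eps_01 : forall j, (j < l)%N -> 0 <= eps l H r ws j <= 1.

Local Notation eps_ := (eps l H r ws).
Local Notation m := (mdeps l d H r ws).
Local Notation I := (inI l d H r ws).

Lemma mdepsS p : m p.+1 = m p + d%:R * eps_ p.+1.
Proof. by rewrite /mdeps big_ord_recr. Qed.

Lemma mdeps_int p : (p < l)%N -> m p \is a Num.int.
Proof.
move=> pl; rewrite /mdeps rpred_sum // => i _.
by apply: (d_integral_eps r dH_int ws_gen); apply: leq_ltn_trans pl; rewrite -ltnS.
Qed.

Lemma mdeps_ge0 p : (p < l)%N -> 0 <= m p.
Proof.
move=> pl; rewrite /mdeps sumr_ge0 // => i _.
have /andP [e0 _] : 0 <= eps_ i <= 1.
  by apply: eps_01; apply: leq_ltn_trans pl; rewrite -ltnS.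
by rewrite mulr_ge0.
Qed.

Lemma mdeps_mono a b : (a <= b)%N -> (b < l)%N -> m a <= m b.
Proof.
elim: b => [|b IH]; first by rewrite leqn0 => /eqP ->.
rewrite leq_eqVlt => /orP [/eqP -> //|]; rewrite ltnS => ab bl.
have /andP [e0 _] := eps_01 bl.
by rewrite mdepsS (le_trans (IH ab (ltnW bl))) // lerDl mulr_ge0.
Qed.

Lemma mdeps_last : m l.-1 = d%:R.
Proof. by rewrite /mdeps prednK // -mulr_sumr sum_eps // mulr1. Qed.

Lemma level_exists p : (p < l)%N -> exists2 t, (t <= d)%N & I t p.
Proof.
move=> pl; have := mdeps_int pl; rewrite intrEge0 ?mdeps_ge0 //.
case/natrP => t Et; exists t; last by rewrite /inI Et.
rewrite -(ler_nat rat) -Et -mdeps_last mdeps_mono //.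
  by rewrite -ltnS prednK.
by rewrite prednK.
Qed.

Lemma inI_last : I d l.-1.
Proof. by rewrite /inI mdeps_last. Qed.

Lemma inI_uniq a b p : I a p -> I b p -> a = b.
Proof. by rewrite /inI => /eqP -> /eqP /eqP; rewrite eqr_nat => /eqP. Qed.

Lemma inI_same_level s t a b : I t a -> I t b -> I s a = I s b.
Proof. by rewrite /inI => /eqP -> /eqP ->. Qed.

Lemma inI_0_d p : I 0 p -> I d p -> False.
Proof. by move=> h0 hd; move: d_gt0; rewrite -(inI_uniq h0 hd). Qed.

Lemma inI_convex t a b c : (a <= c <= b)%N -> (b < l)%N ->
  I t a -> I t b -> I t c.
Proof.
move=> /andP [ac cb] bl /eqP Ea /eqP Eb; rewrite /inI eq_le.
by rewrite -{1}Eb -Ea !mdeps_mono // ?(leq_ltn_trans cb) // (leq_trans ac cb).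
Qed.

Lemma inI0_first p : (p < l)%N -> I 0 p -> I 0 0.
Proof.
move=> pl /eqP E; rewrite /inI eq_le mdeps_ge0 ?andbT ?(leq_ltn_trans _ pl) //.
by rewrite -E mdeps_mono.
Qed.

Lemma eps_zero_of_level t c : (0 < c < l)%N -> I t c.-1 -> I t c -> eps_ c = 0.
Proof.
move=> /andP [c0 _] /eqP E1 /eqP E2.
move: (mdepsS c.-1); rewrite prednK // E1 E2 -[X in X = _]addr0 => /addrI /esym.
by move/eqP; rewrite mulf_eq0 pnatr_eq0 eqn0Ngt d_gt0 => /eqP.
Qed.

Lemma level_pred_of_eps_zero t c : (0 < c)%N -> eps_ c = 0 -> I t c.-1 = I t c.
Proof. by move=> c0 E; rewrite /inI -{2}(prednK c0) mdepsS prednK // E mulr0 addr0. Qed.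

Definition level (p : nat) : nat := find (fun t => I t p) (iota 0 d.+1).

Lemma levelP p : (p < l)%N -> (level p <= d)%N /\ I (level p) p.
Proof.
move=> pl; have [t td ht] := level_exists pl.
have hs : has (fun t => I t p) (iota 0 d.+1).
  by apply/hasP; exists t => //; rewrite mem_iota add0n ltnS.
have hf := hs; rewrite has_find size_iota in hf.
by have := nth_find 0%N hs; rewrite nth_iota // add0n.
Qed.

Lemma level_eq t p : (p < l)%N -> I t p -> level p = t.
Proof. by move=> pl; apply: inI_uniq; case: (levelP pl). Qed.

(* The chain of level t lists, in the order in which they must be nested,
   the indices p whose (possibly shifted) sequence enters C_[t]: the
   elements of I_t in increasing order, and for t in {0, d} those of I_d
   followed by those of I_0.  [Dset Cf p] is the sequence C^p contributed,
   shifted by S^{-1} when p is in I_0. *)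
Definition block (t : nat) : seq nat := [seq p <- iota 0 l | I t p].

Definition chain (t : nat) : seq nat :=
  if (t == 0%N) || (t == d) then block d ++ block 0 else block t.

Definition Dset (Cf : nat -> nat -> int) (p : nat) : nat -> int :=
  if I 0 p then shiftS (-1) (Cf p) else Cf p.

Lemma mem_block t p : (p \in block t) = (p < l)%N && I t p.
Proof. by rewrite mem_filter mem_iota add0n andbC. Qed.

Lemma block_sorted t : sorted ltn (block t).
Proof. by apply: sorted_filter; [exact: ltn_trans | exact: iota_ltn_sorted]. Qed.

Lemma block_nth t i : (i < size (block t))%N ->
  (nth 0%N (block t) i < l)%N /\ I t (nth 0%N (block t) i).
Proof. by move=> /(mem_nth 0%N); rewrite mem_block => /andP. Qed.

Lemma block_nth_mono t i j : (i <= j)%N -> (j < size (block t))%N ->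
  (nth 0%N (block t) i <= nth 0%N (block t) j)%N.
Proof.
move=> ij js; apply: (sorted_leq_nth leq_trans leqnn 0%N) => //; last first.
  by rewrite inE (leq_ltn_trans ij js).
by apply: sub_sorted (block_sorted t) => ? ? /ltnW.
Qed.

Lemma index_block_mono t a b : (a <= b)%N -> a \in block t -> b \in block t ->
  (index a (block t) <= index b (block t))%N.
Proof.
move=> ab ha hb; rewrite leqNgt; apply/negP.
by move=> /(sorted_ltn_index ltn_trans (block_sorted t) _ _ hb ha); rewrite ltnNge ab.
Qed.

Lemma mem_chain t p : (p < l)%N -> I t p -> p \in chain t.
Proof.
move=> pl h; rewrite /chain; case: ifP => ht; last by rewrite mem_block pl.
rewrite mem_cat !mem_block pl /=.
by move: h; case/orP: ht => /eqP -> ->; rewrite ?orbT.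
Qed.

Lemma chain_lt t p : p \in chain t -> (p < l)%N.
Proof.
rewrite /chain; case: ifP => _; last by rewrite mem_block => /andP [].
by rewrite mem_cat !mem_block => /orP [] /andP [].
Qed.

(* I_d and I_0 being disjoint, chains have no repetition. *)
Lemma uniq_chain t : uniq (chain t).
Proof.
have ub s : uniq (block s) by exact/filter_uniq/iota_uniq.
rewrite /chain; case: ifP => _ //; rewrite cat_uniq !ub /= andbT.
apply/hasPn => p; rewrite !mem_block => /andP [_ h0]; apply/negP => /andP [_ hd].
exact: inI_0_d h0 hd.
Qed.

Lemma chain_level t p : p \in chain t ->
  chain (level p) = chain t /\
  (forall Cf x, bracket l d H r ws Cf (level p) x = bracket l d H r ws Cf t x).
Proof.
move=> hp; have [_ hl] := levelP (chain_lt hp); move: (level p) hl => a ha.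
have [->|[Ha Ht]] : a = t \/ ((a == 0%N) || (a == d)) /\ ((t == 0%N) || (t == d)).
- move: hp; rewrite /chain; case: ifP => Ht; last first.
    by rewrite mem_block => /andP [_ /(inI_uniq ha)]; left.
  by right; split => //; move: hp; rewrite mem_cat !mem_block
    => /orP [] /andP [_ /(inI_uniq ha) ->]; rewrite eqxx ?orbT.
- by [].
- by split; [rewrite /chain Ha Ht | move=> Cf x; rewrite /bracket Ha Ht].
Qed.

Lemma bracket_chain Cf t x :
  bracket l d H r ws Cf t x = (\sum_(p <- chain t) ind (memC (Dset Cf p) x))%N.
Proof.
have blockE s (F : nat -> nat) :
    (\sum_(p < l | I s p) F p)%N = (\sum_(p <- block s) F p)%N.
  by rewrite big_filter -(big_mkord (I s) F) /index_iota subn0.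
rewrite /bracket /chain; case: ifP => Ht.
  rewrite big_cat addnC (blockE 0%N (fun p => ind (memC (shiftS (-1) (Cf p)) x))).
  rewrite (blockE d (fun p => ind (memC (Cf p) x))).
  congr addn; rewrite !big_filter; apply: eq_bigr => p Hp; rewrite /Dset ?Hp //.
  by case: ifP => // h; case: (inI_0_d h Hp).
rewrite (blockE t (fun p => ind (memC (Cf p) x))) !big_filter.
apply: eq_bigr => p Hp; rewrite /Dset.
by case: ifP => // h; move: Ht; rewrite (inI_uniq Hp h).
Qed.

Lemma chain_index_mono t a b : (a <= b)%N -> (b < l)%N -> I t a -> I t b ->
  (index a (chain t) <= index b (chain t))%N.
Proof.
move=> ab bl ha hb; have al := leq_ltn_trans ab bl.
have ma : a \in block t by rewrite mem_block al.
have mb : b \in block t by rewrite mem_block bl.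
rewrite /chain; case: ifP => Ht; last exact: index_block_mono.
rewrite !index_cat; case/orP: Ht => /eqP Et; move: ha hb ma mb; rewrite Et => ha hb ma mb.
  have notd c : I 0 c -> (c \in block d) = false.
    by move=> hc; rewrite mem_block; apply/negP => /andP [_ /(inI_0_d hc)].
  by rewrite !notd // leq_add2l; exact: index_block_mono.
by rewrite ma mb; exact: index_block_mono.
Qed.

Lemma chain_wrap_index : I 0 0 -> (index l.-1 (chain 0) <= index 0 (chain 0))%N.
Proof.
move=> h00; have ll : (l.-1 < l)%N by rewrite prednK.
have hl : l.-1 \in block d by rewrite mem_block ll inI_last.
have h0 : (0 \in block d) = false.
  by rewrite mem_block; apply/negP => /andP [_ /(inI_0_d h00)].
rewrite /chain eqxx /= !index_cat hl h0.
by apply: leq_trans (leq_addr _ _); rewrite ltnW // index_mem.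
Qed.

Lemma chain_d : chain d = chain 0.
Proof. by rewrite /chain !eqxx orbT. Qed.

Lemma bracket_d Cf x : bracket l d H r ws Cf d x = bracket l d H r ws Cf 0 x.
Proof. by rewrite /bracket !eqxx orbT. Qed.

Variable lam : nat -> seq nat.
Local Notation good := (good_tuple l d H r ws lam).

Lemma good_level_included Ct t a b : good Ct -> (a <= b)%N -> (b < l)%N ->
  I t a -> I t b -> included (Ct b) (Ct a).
Proof.
move=> [_ [_ [Hiii _]]]; elim: b => [|b IH].
  by rewrite leqn0 => /eqP -> _ _ _ x.
rewrite leq_eqVlt => /orP [/eqP -> _ _ _ x //|]; rewrite ltnS => ab bl ha hb x hx.
have hb' : I t b by apply: (inI_convex (b := b.+1)) ha hb; rewrite // ab /=.
apply: (IH ab (ltnW bl) ha hb'); apply: Hiii hx => //.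
exact: (eps_zero_of_level (c := b.+1) bl hb' hb).
Qed.

Lemma good_wrap Ct q a : good Ct -> (q < l)%N -> I 0 q -> (a < l)%N -> I d a ->
  included (shiftS (-1) (Ct q)) (Ct a).
Proof.
move=> Hg ql hq al ha x /memC_shift hx.
have h00 := inI0_first ql hq.
have h0 : memC (Ct 0%N) (x + 1) := good_level_included Hg (leq0n q) ql h00 hq hx.
have ll : (l.-1 < l)%N by rewrite prednK.
have al' : (a <= l.-1)%N by rewrite -ltnS prednK.
apply: (good_level_included Hg al' ll ha inI_last).
by case: Hg => [_ [_ [_ Hiv]]]; apply: Hiv h00 _ _; apply/memC_shift.
Qed.

Lemma good_block_nested Ct t i j y : good Ct -> (i <= j)%N -> (j < size (block t))%N ->
  memC (Dset Ct (nth 0%N (block t) j)) y -> memC (Dset Ct (nth 0%N (block t) i)) y.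
Proof.
move=> Hg ij js; have is_ := leq_ltn_trans ij js.
have [al ha] := block_nth is_; have [bl hb] := block_nth js.
have sub := good_level_included Hg (block_nth_mono ij js) bl ha hb.
rewrite /Dset (inI_same_level 0 ha hb); case: ifP => _; last exact: sub.
by move/memC_shift=> hy; apply/memC_shift; apply: sub.
Qed.

Lemma good_chain_nested Ct t i j y : good Ct -> (i <= j)%N -> (j < size (chain t))%N ->
  memC (Dset Ct (nth 0%N (chain t) j)) y -> memC (Dset Ct (nth 0%N (chain t) i)) y.
Proof.
move=> Hg ij; rewrite /chain; case: ifP => _; last exact: good_block_nested.
rewrite size_cat !nth_cat => js.
case: (ltnP j (size (block d))) => jA.
  by rewrite (leq_ltn_trans ij jA); apply: good_block_nested.
have jB : (j - size (block d) < size (block 0))%N by rewrite ltn_subLR.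
case: (ltnP i (size (block d))) => iA; last first.
  exact: (good_block_nested Hg (leq_sub2r _ ij) jB).
have [al ha] := block_nth iA; have [bl hb] := block_nth jB.
have a0 : ~~ I 0 (nth 0%N (block d) i) by apply/negP => /inI_0_d /(_ ha).
rewrite /Dset hb (negbTE a0).
by move=> /(good_wrap Hg bl hb al ha).
Qed.

Definition mult (t : nat) (y : int) : nat := bracket l d H r ws (Clam r ws lam) t y.

Definition rank (p : nat) : nat := index p (chain (level p)).

Definition characterized (Cf : nat -> nat -> int) : Prop :=
  forall p, (p < l)%N -> forall y, memC (Dset Cf p) y <-> (rank p < mult (level p) y)%N.

(* The values C^p must take, in unshifted coordinates. *)
Definition rank_set (p : nat) (x : int) : Prop :=
  (rank p < mult (level p) (if I 0 p then (x - 1)%R else x))%N.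

Lemma rank_lt p : (p < l)%N -> (rank p < size (chain (level p)))%N.
Proof. by move=> pl; rewrite index_mem; apply: mem_chain pl (levelP pl).2. Qed.

Lemma Dset_rank_set Cf p :
  (forall x, memC (Cf p) x <-> rank_set p x) <->
  (forall y, memC (Dset Cf p) y <-> (rank p < mult (level p) y)%N).
Proof.
rewrite /rank_set /Dset; case: (I 0 p) => //.
by split=> E y; [rewrite memC_shift E addrK | rewrite -E memC_shift subrK].
Qed.

Lemma characterized_mem Cf p x : characterized Cf -> (p < l)%N ->
  (memC (Cf p) x <-> rank_set p x).
Proof. by move=> ch pl; move: x; apply/Dset_rank_set; apply: ch. Qed.

(* Good tuples are characterized: count along the nested chain and use (ii). *)
Lemma good_characterized Ct : good Ct -> characterized Ct.
Proof.
move=> Hg p pl y; have [td ht] := levelP pl.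
have nested i j : (i <= j)%N -> (j < size (chain (level p)))%N ->
    memC (Dset Ct (nth 0%N (chain (level p)) j)) y ->
    memC (Dset Ct (nth 0%N (chain (level p)) i)) y.
  by move=> ij js; apply: good_chain_nested.
have := count_nested (D := fun q => memC (Dset Ct q) y) nested (rank_lt pl).
rewrite nth_index ?(mem_chain pl ht) // -bracket_chain.
by case: Hg => [_ [-> // _]] E; split=> /E.
Qed.

Lemma characterized_unique C1 C2 :
  (forall p, (p < l)%N -> strictly_decreasing (C1 p)) ->
  (forall p, (p < l)%N -> strictly_decreasing (C2 p)) ->
  characterized C1 -> characterized C2 ->
  forall p, (p < l)%N -> forall i, C1 p i = C2 p i.
Proof.
move=> sd1 sd2 ch1 ch2 p pl; apply: sd_ext (sd1 p pl) (sd2 p pl) _ => x.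
by rewrite (characterized_mem _ ch1 pl) (characterized_mem _ ch2 pl).
Qed.

Definition Cbound : nat :=
  \max_(q < l) (`|r q| + size (lam (wperm_inv ws q)) + sumn (lam (wperm_inv ws q)))%N.

Lemma Dset_Clam_bounds q : (q < l)%N ->
  (forall y, y <= - Cbound%:Z - 1 -> memC (Dset (Clam r ws lam) q) y) /\
  (forall y, memC (Dset (Clam r ws lam) q) y -> y <= Cbound%:Z).
Proof.
move=> ql; have hB : (`|r q| + size (lam (wperm_inv ws q)) + sumn (lam (wperm_inv ws q))
    <= Cbound)%N by rewrite /Cbound (bigD1 (Ordinal ql)) //= leq_maxl.
have [lo up] := beta_bounds hB.
rewrite /Dset /Clam; case: ifP => _; split=> y.
- by move=> hy; apply/memC_shift/lo; lia.
- by move/memC_shift/up; lia.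
- by move=> hy; apply: lo; lia.
- exact: up.
Qed.

Lemma mult_low t y : y <= - Cbound%:Z - 1 -> mult t y = size (chain t).
Proof.
move=> hy; rewrite /mult bracket_chain big_seq (eq_bigr (fun _ => 1%N)) -?big_seq ?sum1_size //.
by move=> q qs; apply: ind_T; apply: (Dset_Clam_bounds (chain_lt qs)).1.
Qed.

Lemma mult_up t y : (0 < mult t y)%N -> y <= Cbound%:Z.
Proof.
rewrite /mult bracket_chain.
case: (classic (exists2 q, q \in chain t & memC (Dset (Clam r ws lam) q) y)).
  by case=> q qs hq _; apply: (Dset_Clam_bounds (chain_lt qs)).2.
move=> none; rewrite big1_seq // => q /andP [_ qs].
by apply: ind_F => hq; apply: none; exists q.
Qed.

Lemma rank_set_bounds p : (p < l)%N ->
  (forall x, x <= - Cbound%:Z - 1 -> rank_set p x) /\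
  (forall x, rank_set p x -> x <= Cbound%:Z + 1).
Proof.
move=> pl; rewrite /rank_set; split=> x.
  by move=> hx; rewrite mult_low ?rank_lt //; case: ifP => _; lia.
by move/(leq_ltn_trans (leq0n _))/mult_up; case: ifP => _; lia.
Qed.

Lemma characterized_exists : exists Ct : nat -> nat -> int,
  (forall p, (p < l)%N -> strictly_decreasing (Ct p)) /\ characterized Ct.
Proof.
have /choice [Ct HCt] : forall p, exists C : nat -> int, (p < l)%N ->
    strictly_decreasing C /\ (forall x, memC C x <-> rank_set p x).
  move=> p; case: (ltnP p l) => pl; last by exists (fun=> 0).
  have [lo up] := rank_set_bounds pl.
  by have [C HC] := decreasing_enumeration lo up; exists C.
exists Ct; split=> [p /HCt [] //|p pl].
by apply/Dset_rank_set; case: (HCt p pl).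
Qed.

Lemma characterized_bracket Ct : characterized Ct ->
  forall t x, bracket l d H r ws Ct t x = mult t x.
Proof.
move=> ch t x; rewrite bracket_chain; apply: count_threshold (uniq_chain t) _ _.
  by rewrite /mult bracket_chain sum_ind_le.
move=> q qs; have [Ec Eb] := chain_level qs.
by rewrite ch ?(chain_lt qs) // /rank /mult Ec Eb.
Qed.

Lemma characterized_pred Ct p : characterized Ct -> (0 < p < l)%N -> eps_ p = 0 ->
  included (Ct p) (Ct p.-1).
Proof.
move=> ch /andP [p0 pl] e0 x.
have ql : (p.-1 < l)%N by rewrite (leq_ltn_trans (leq_pred p)).
have [_ ht] := levelP pl.
have hq : I (level p) p.-1 by rewrite (level_pred_of_eps_zero _ p0 e0).
rewrite !(characterized_mem _ ch) // /rank_set /rank (level_eq ql hq).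
rewrite (level_pred_of_eps_zero _ p0 e0); apply: leq_ltn_trans.
exact: chain_index_mono (leq_pred p) pl hq ht.
Qed.

Lemma characterized_wrap Ct : characterized Ct -> I 0 0 ->
  included (shiftS (-1) (Ct 0%N)) (Ct l.-1).
Proof.
move=> ch h00 x /memC_shift; have ll : (l.-1 < l)%N by rewrite prednK.
have hl := inI_last; have nl : I 0 l.-1 = false.
  by apply/negP => /inI_0_d /(_ hl).
rewrite !(characterized_mem _ ch) // /rank_set h00 nl addrK /rank.
rewrite (level_eq l_gt0 h00) (level_eq ll hl) /mult bracket_d chain_d.
by apply: leq_ltn_trans; apply: chain_wrap_index.
Qed.

Lemma characterized_good Ct : (forall p, (p < l)%N -> strictly_decreasing (Ct p)) ->
  characterized Ct -> good Ct.
Proof.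
move=> sd ch; split=> //; split; last split.
- by move=> t _ x; rewrite characterized_bracket.
- by move=> p pl e0; apply: characterized_pred.
- exact: characterized_wrap.
Qed.

End Characterization.

Theorem mainTheorem4 (l n d : nat) (H : nat -> rat) (r : nat -> int) (ws : seq nat)
  (lam : nat -> seq nat) :
  (0 < l)%N -> (0 < n)%N -> (0 < d)%N ->
  (forall i, (0 < i < l)%N -> exists z : int, (d%:R * H i)%R = z%:~R) ->
  (\sum_(j < l) r j)%R = 0%R ->
  all (fun i => 0 < i < l)%N ws ->
  (forall j, (j < l)%N -> (0 <= eps l H r ws j <= 1)%R) ->
  is_multipartition l n lam ->
  exists Ct : nat -> nat -> int,
    good_tuple l d H r ws lam Ct /\
    (forall Ct', good_tuple l d H r ws lam Ct' ->
       forall p, (p < l)%N -> forall i, Ct' p i = Ct p i).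
Proof.
move=> l_gt0 _ d_gt0 dH_int _ ws_gen eps_01 _.
have [Ct [Ct_sd Ct_char]] := characterized_exists l_gt0 d_gt0 dH_int ws_gen eps_01 lam.
exists Ct; split.
  exact: (characterized_good l_gt0 d_gt0 dH_int ws_gen eps_01 Ct_sd Ct_char).
move=> Ct' Ct'_good; have [Ct'_sd _] := Ct'_good.
apply: (characterized_unique Ct'_sd Ct_sd _ Ct_char).
exact: (good_characterized l_gt0 d_gt0 dH_int ws_gen eps_01 Ct'_good).
Qed.
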